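(* Let $\boldsymbol{\psi}=(\psi_k)_{k\in\mathbb{K}}$ be a regularization of $\psi:\mathcal{M}\to\Theta$ which is continuous at the data-generating distribution $P\in\mathcal{M}$ with respect to a distance $d$, with moduli $(\delta_k)_{k\in\mathbb{K}}$, and let $(r_n)$ be a real-valued positive diverging sequence with $d(P_n,P)=o_P(r_n^{-1})$. Suppose $k\mapsto\|\psi_k(P)-\psi(P)\|_\Theta$ is continuous and non-increasing and, for each $n$, $k\mapsto\delta_k(r_n^{-1})$ is continuous and non-decreasing. For each $n$ let $\mathcal{G}_n$ be a finite subset of $\mathbb{K}$, let $$\mathcal{L}_n=\{k\in\mathcal{G}_n:\ \|\psi_k(P_n)-\psi_{k'}(P_n)\|_\Theta\le4\delta_{k'}(r_n^{-1})\ \forall k'\ge k,\ k'\in\mathcal{G}_n\}$$ and $\tilde k_n(r_n)=\min\mathcal{L}_n$. Then $$\|\psi_{\tilde k_n(r_n)}(P_n)-\psi(P)\|_\Theta=O_P\left(\inf_{k\in\mathcal{G}_n}\{\delta_k(r_n^{-1})+\|\psi_k(P)-\psi(P)\|_\Theta\}\right).$$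
   Context: Setting: $\mathbb{Z}\subseteq\mathbb{R}^d$; data IID with law $P$; $\mathbf{P}$ the product probability on $\mathbb{Z}^\infty$ (to which $o_P,O_P$ refer); $ca(\mathbb{Z})$ signed Borel measures of finite variation; $\mathcal{D}$ discretely supported probability measures; $P_n$ the empirical distribution. $\mathcal{M}$ a set of Borel probability measures, $(\Theta,\|\cdot\|_\Theta)$ a normed space, $\mathbb{K}\subseteq\mathbb{R}_+$ unbounded above. A regularization is a family $(\psi_k)_{k\in\mathbb{K}}$, $\psi_k:\mathbb{D}_\psi\subseteq ca(\mathbb{Z})\to\Theta$, $\mathbb{D}_\psi\supseteq\mathcal{M}\cup\mathcal{D}$, with $\|\psi_k(Q)-\psi(Q)\|_\Theta\to0$ for all $Q\in\mathcal{M}$. A modulus of continuity is a continuous non-decreasing $f:\mathbb{R}_+\to\mathbb{R}_+$ with $f(t)=0$ iff $t=0$; continuity at $P$ w.r.t. $d$ means moduli $(\delta_k)$ with $\|\psi_k(P')-\psi_k(P)\|_\Theta\le\delta_k(d(P',P))$ for all $k$ and $P'\in\mathbb{D}_\psi$. *)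

From mathcomp Require Import all_boot all_order all_algebra.
From mathcomp Require Import all_classical all_reals all_analysis.
Import Order.TTheory GRing.Theory Num.Theory numFieldTopology.Exports numFieldNormedType.Exports.

Set Implicit Arguments.
Unset Strict Implicit.
Unset Printing Implicit Defensive.

Local Open Scope classical_set_scope.
Local Open Scope ring_scope.

Section Defs.
Context {R : realType} {d : nat}.

(* Set functions on R^d (= 'M[R]_(1, d)); measures on Z are represented as
   set functions on subsets of R^d that vanish off the trace sigma-algebra of Z. *)
Definition Meas := set 'M[R]_(1, d) -> R.

Definition borel_Rd : set (set 'M[R]_(1, d)) :=
  <<s (open : set (set 'M[R]_(1, d))) >>.

Definition Zmeasurable (Z : set 'M[R]_(1, d)) (A : set 'M[R]_(1, d)) : Prop :=
  exists B, borel_Rd B /\ A = B `&` Z.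

Definition is_ca (Z : set 'M[R]_(1, d)) (mu : Meas) : Prop :=
  (forall A, ~ Zmeasurable Z A -> mu A = 0) /\
  (forall F : nat -> set 'M[R]_(1, d), (forall i, Zmeasurable Z (F i)) ->
     trivIset setT F ->
     series (fun i => mu (F i)) n @[n --> \oo] --> mu (\bigcup_i F i)) /\
  (exists C : R, forall F : nat -> set 'M[R]_(1, d),
     (forall i, Zmeasurable Z (F i)) -> trivIset setT F ->
     forall n, \sum_(i < n) `|mu (F i)| <= C).

Definition is_prob (Z : set 'M[R]_(1, d)) (mu : Meas) : Prop :=
  is_ca Z mu /\ (forall A, Zmeasurable Z A -> 0 <= mu A) /\ mu Z = 1.

Definition is_discrete_prob (Z : set 'M[R]_(1, d)) (mu : Meas) : Prop :=
  is_prob Z mu /\ exists S, countable S /\ S `<=` Z /\ mu S = 1.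

Definition empirical {T : Type} (Z : set 'M[R]_(1, d))
  (X : nat -> T -> 'M[R]_(1, d)) (n : nat) (w : T) : Meas :=
  fun A => if pselect (Zmeasurable Z A)
           then n%:R^-1 * \sum_(i < n) \1_A (X i w) else 0.

Definition iid_law {dO : measure_display} {Om : measurableType dO}
  (Pr : probability Om R) (Z : set 'M[R]_(1, d))
  (X : nat -> Om -> 'M[R]_(1, d)) (P : Meas) : Prop :=
  (forall i w, Z (X i w)) /\
  (forall i A, Zmeasurable Z A -> measurable (X i @^-1` A)) /\
  (forall i A, Zmeasurable Z A -> Pr (X i @^-1` A) = (P A)%:E) /\
  (forall (I : seq nat) (A : nat -> set 'M[R]_(1, d)), uniq I ->
     (forall i, Zmeasurable Z (A i)) ->
     (Pr (\bigcap_(i in [set` I]) X i @^-1` A i)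
      = \prod_(i <- I) Pr (X i @^-1` A i))%E).

(* E is contained in a measurable set of probability < eta
   (i.e. the outer probability of E is < eta) *)
Definition outer_lt {dO : measure_display} {Om : measurableType dO}
  (Pr : probability Om R) (E : set Om) (eta : R) : Prop :=
  exists B, measurable B /\ E `<=` B /\ (Pr B < eta%:E)%E.

Definition little_o_in_prob {dO : measure_display} {Om : measurableType dO}
  (Pr : probability Om R) (Y : nat -> Om -> R) (a : nat -> R) : Prop :=
  forall eps eta : R, 0 < eps -> 0 < eta ->
    \forall n \near \oo, outer_lt Pr [set w | eps * a n < `|Y n w|] eta.

Definition big_O_in_prob {dO : measure_display} {Om : measurableType dO}
  (Pr : probability Om R) (Y : nat -> Om -> R) (a : nat -> R) : Prop :=
  forall eta : R, 0 < eta -> exists M : R,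
    \forall n \near \oo, outer_lt Pr [set w | M * a n < `|Y n w|] eta.

Definition modulus (f : R -> R) : Prop :=
  {within [set t : R | 0 <= t], continuous f} /\
  (forall s t, 0 <= s -> s <= t -> f s <= f t) /\
  (forall t, 0 <= t -> 0 <= f t) /\
  (forall t, 0 <= t -> (f t = 0 <-> t = 0)).

Definition is_distance (Dpsi : set Meas) (dist : Meas -> Meas -> R) : Prop :=
  forall x y z, Dpsi x -> Dpsi y -> Dpsi z ->
    0 <= dist x y /\ (dist x y = 0 <-> x = y) /\ dist x y = dist y x /\
    dist x z <= dist x y + dist y z.

Definition regularization {Theta : normedModType R} (Z : set 'M[R]_(1, d))
  (K : set R) (M : set Meas) (psi : Meas -> Theta)
  (psik : R -> Meas -> Theta) (Dpsi : set Meas) : Prop :=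
  Dpsi `<=` is_ca Z /\ M `<=` Dpsi /\ is_discrete_prob Z `<=` Dpsi /\
  (forall Q, M Q -> forall e : R, 0 < e -> exists k0 : R,
     forall k, K k -> k0 <= k -> `|psik k Q - psi Q| < e).

Definition reg_continuous_at {Theta : normedModType R} (K : set R)
  (psik : R -> Meas -> Theta) (Dpsi : set Meas) (dist : Meas -> Meas -> R)
  (P : Meas) (delta : R -> R -> R) : Prop :=
  (forall k, K k -> modulus (delta k)) /\
  (forall k P', K k -> Dpsi P' ->
     `|psik k P' - psik k P| <= delta k (dist P' P)).

Definition Lset {Theta : normedModType R} (psik : R -> Meas -> Theta)
  (delta : R -> R -> R) (G : set R) (t : R) (mu : Meas) : set R :=
  [set k | G k /\ forall k', G k' -> k <= k' ->
     `|psik k mu - psik k' mu| <= 4 * delta k' t].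

Definition ktilde {Theta : normedModType R} (psik : R -> Meas -> Theta)
  (delta : R -> R -> R) (G : set R) (t : R) (mu : Meas) : R :=
  inf (Lset psik delta G t mu).

End Defs.

(* Write b_k = |psi_k(P) - psi(P)| for the bias. On the event d(P_n, P) <= 1/r_n,
   whose complement has probability o(1), the empirical measure lies in the domain
   of continuity, so every grid point satisfies
   |psi_k(P_n) - psi(P)| <= delta_k(1/r_n) + b_k, with delta nondecreasing and b
   nonincreasing in k. Lepski's rule then obeys a deterministic oracle inequality
   with constant 5. Compare k~ with any grid point k: if k~ <= k, the test at k~
   and the bound at k give 4 delta_k + (delta_k + b_k). Otherwise, the largest grid
   point k_p < k~ fails the test against some k' >= k~, and the triangle
   inequality turns this into delta_k' < b_k_p <= b_k, so the error at k~ is at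
   most delta_k~ + b_k~ <= delta_k' + b_k <= 2 b_k. *)

From mathcomp Require Import all_boot all_order all_algebra.
From mathcomp Require Import all_classical all_reals all_analysis finmap.
From mathcomp Require Import lra.
Import Order.TTheory GRing.Theory Num.Theory numFieldTopology.Exports numFieldNormedType.Exports.

Local Open Scope classical_set_scope.
Local Open Scope ring_scope.

Section FiniteExtremum.
Context {disp : Order.disp_t} {T : orderType disp}.

Lemma finite_set_has_min {A : set T} : finite_set A -> A !=set0 ->
  exists2 x, A x & forall y, A y -> (x <= y)%O.
Proof.
move=> fA [a Aa]; have a_in : a \in fset_set A by rewrite in_fset_set //; exact: mem_set.
have [i _ imin] := @arg_minP _ _ _ [` a_in]%fset xpredT val isT.
exists (val i); first by move: (fsvalP i); rewrite in_fset_set // in_setE.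
move=> y Ay; have y_in : y \in fset_set A by rewrite in_fset_set //; exact: mem_set.
exact: (imin [` y_in]%fset).
Qed.

Lemma finite_set_has_max {A : set T} : finite_set A -> A !=set0 ->
  exists2 x, A x & forall y, A y -> (y <= x)%O.
Proof.
move=> fA [a Aa]; have a_in : a \in fset_set A by rewrite in_fset_set //; exact: mem_set.
have [i _ imax] := @arg_maxP _ _ _ [` a_in]%fset xpredT val isT.
exists (val i); first by move: (fsvalP i); rewrite in_fset_set // in_setE.
move=> y Ay; have y_in : y \in fset_set A by rewrite in_fset_set //; exact: mem_set.
exact: (imax [` y_in]%fset).
Qed.

End FiniteExtremum.

Section FiniteInfSup.
Context {R : realType} {A : set R}.
Hypotheses (fA : finite_set A) (A0 : A !=set0).

Lemma finite_set_inf : A (inf A) /\ lbound A (inf A).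
Proof.
have [x Ax xmin] := finite_set_has_min fA A0.
suff -> : inf A = x by [].
apply/eqP; rewrite eq_le lb_le_inf // andbT.
by apply: ge_inf => //; exists x.
Qed.

Lemma finite_set_sup : A (sup A) /\ ubound A (sup A).
Proof.
have [x Ax xmax] := finite_set_has_max fA A0.
suff -> : sup A = x by [].
apply/eqP; rewrite eq_le ge_sup //=.
by apply: ub_le_sup => //; exists x.
Qed.

End FiniteInfSup.

Section Lepski.
Context {R : realType} {V : normedZmodType R}.

Definition lepski_set (G : set R) (dl : R -> R) (f : R -> V) : set R :=
  [set k | G k /\ forall k', G k' -> k <= k' -> `|f k - f k'| <= 4 * dl k'].

Variables (G : set R) (dl b : R -> R) (f : R -> V) (t : V).
Hypotheses (fG : finite_set G) (G0 : G !=set0).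
Hypotheses (dl_ge0 : forall {k}, G k -> 0 <= dl k) (b_ge0 : forall {k}, G k -> 0 <= b k).
Hypothesis dl_mono : forall {k k'}, G k -> G k' -> k <= k' -> dl k <= dl k'.
Hypothesis b_anti : forall {k k'}, G k -> G k' -> k <= k' -> b k' <= b k.
Hypothesis f_err : forall {k}, G k -> `|f k - t| <= dl k + b k.

Let L := lepski_set G dl f.

Lemma lepski_set_sup : L (sup G).
Proof.
have [GM Mmax] := finite_set_sup fG G0.
split=> // k' Gk' Mk'; have -> : k' = sup G by apply/eqP; rewrite eq_le Mk' Mmax.
by rewrite subrr normr0 mulr_ge0 ?dl_ge0.
Qed.

Lemma lepski_set_inf : L (inf L) /\ lbound L (inf L).
Proof.
apply: finite_set_inf; last by exists (sup G); exact: lepski_set_sup.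
by apply: sub_finite_set fG => k [].
Qed.

Lemma notin_lepski_set k : G k -> ~ L k ->
  exists k', [/\ G k', k < k' & dl k' < b k].
Proof.
move=> Gk /not_andP[//|/existsNP[k' /not_implyP[Gk' /not_implyP[kk' /negP]]]].
rewrite -ltNge => test_fails; exists k'.
have k_neq_k' : k != k'.
  by apply: contraTneq test_fails => <-; rewrite subrr normr0 -leNgt mulr_ge0 ?dl_ge0.
split=> //; first by rewrite lt_neqAle k_neq_k'.
have := ler_distD t (f k) (f k'); rewrite (distrC t).
have := f_err Gk; have := f_err Gk'; have := dl_mono Gk Gk' kk'.
have := b_anti Gk Gk' kk'; lra.
Qed.

Lemma lepski_le_oracle k : G k -> `|f (inf L) - t| <= 5 * (dl k + b k).
Proof.
move=> Gk; have [[Gkt kt_test] kt_min] := lepski_set_inf.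
set kt := inf L in Gkt kt_test kt_min *.
have := dl_ge0 Gk; have := b_ge0 Gk.
have [kt_le_k|k_lt_kt] := leP kt k.
  have := ler_distD (f k) (f kt) t; have := kt_test _ Gk kt_le_k; have := f_err Gk.
  lra.
pose S := [set k' | G k' /\ k' < kt].
have [[Gkp kp_lt] kp_max] : S (sup S) /\ ubound S (sup S).
  by apply: finite_set_sup; [apply: sub_finite_set fG => ? [] | exists k].
set kp := sup S in Gkp kp_lt kp_max.
have [k' [Gk' kp_lt_k' dlk'_lt]] : exists k', [/\ G k', kp < k' & dl k' < b kp].
  by apply: notin_lepski_set => // /kt_min; rewrite leNgt kp_lt.
have kt_le_k' : kt <= k'.
  by rewrite leNgt; apply/negP => k'_lt; move: kp_lt_k'; rewrite ltNge kp_max.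
have k_le_kp : k <= kp by apply: kp_max.
have := f_err Gkt; have := dl_mono Gkt Gk' kt_le_k'.
have := b_anti Gk Gkp k_le_kp; have := b_anti Gk Gkt (ltW k_lt_kt).
lra.
Qed.

Theorem lepski_oracle : `|f (inf L) - t| <= 5 * inf [set dl k + b k | k in G].
Proof.
rewrite -ler_pdivrMl ?ltr0n //; apply: lb_le_inf; first exact: image_nonempty.
by move=> _ [k Gk <-]; rewrite ler_pdivrMl ?ltr0n ?lepski_le_oracle.
Qed.

End Lepski.

Section DisjointIndicators.
Context {R : realType} {T : Type} {F : nat -> set T} {x : T}.
Hypothesis tF : trivIset setT F.

Lemma trivIset_sum_indic {j0} N : F j0 x -> \sum_(j < N) \1_(F j) x = (j0 < N)%:R :> R.
Proof.
move=> Fx; rewrite (eq_bigr (fun j : 'I_N => if val j == j0 then 1 else 0)).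
  by rewrite -big_mkcond /= (big_ord1_eq _ (fun=> 1)); case: ltnP.
move=> j _; rewrite indicE; case: eqP => [-> | j_neq]; first by rewrite mem_set.
rewrite memNset // => Fjx; apply: j_neq.
apply: contrapT => /eqP j_neq_j0; move/trivIsetP : tF => /(_ _ _ I I j_neq_j0) disj.
by have : (F j `&` F j0) x by []; rewrite disj.
Qed.

Lemma trivIset_sum_indic_le1 N : \sum_(j < N) \1_(F j) x <= 1 :> R.
Proof.
have [[j0 _ Fx]|xNF] := pselect ((\bigcup_j F j) x).
  by rewrite (trivIset_sum_indic _ Fx) lern1 leq_b1.
by rewrite big1 // => j _; rewrite indicE memNset // => Fjx; apply: xNF; exists j.
Qed.

Lemma trivIset_sum_indic_near : \forall N \near \oo,
  \sum_(j < N) \1_(F j) x = \1_(\bigcup_j F j) x :> R.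
Proof.
have [[j0 _ Fx]|xNF] := pselect ((\bigcup_j F j) x).
  exists j0.+1 => // N /= j0N.
  by rewrite (trivIset_sum_indic _ Fx) j0N indicE mem_set //; exists j0.
near=> N; rewrite indicE memNset // big1 // => j _.
by rewrite indicE memNset // => Fjx; apply: xNF; exists j.
Unshelve. all: by end_near.
Qed.

End DisjointIndicators.

Section TraceBorel.
Context {R : realType} {d : nat}.
Context {Z : set 'M[R]_(1, d)}.

Lemma borel_Rd_closed (A : set 'M[R]_(1, d)) : closed A -> borel_Rd A.
Proof.
by move=> /closed_openC/sub_sigma_algebra/sigma_algebraC; rewrite setCK.
Qed.

Lemma Zmeasurable_Z : Zmeasurable Z Z.
Proof. by exists setT; split; [apply: sub_sigma_algebra; exact: openT | rewrite setTI]. Qed.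

Lemma Zmeasurable_bigcup {F : nat -> set 'M[R]_(1, d)} :
  (forall i, Zmeasurable Z (F i)) -> Zmeasurable Z (\bigcup_i F i).
Proof.
move=> /choice[B FB]; exists (\bigcup_i B i); split.
  by apply: sigma_algebra_bigcup => i; case: (FB i).
by rewrite setI_bigcupl; apply: eq_bigcupr => i _; case: (FB i).
Qed.

Lemma Zmeasurable_finite {A : set 'M[R]_(1, d)} :
  finite_set A -> A `<=` Z -> Zmeasurable Z A.
Proof.
move=> fA AZ; exists A; split; last by apply/esym/setIidl.
apply: borel_Rd_closed; move: fA; apply: accessible_finite_set_closed.1.
apply: hausdorff_accessible; exact: norm_hausdorff.
Qed.

End TraceBorel.

Section EmpiricalMeasure.
Context {R : realType} {d : nat} {T : Type}.
Variables (Z : set 'M[R]_(1, d)) (X : nat -> T -> 'M[R]_(1, d)) (n : nat) (w : T).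

Let mu := empirical Z X n w.

Lemma empiricalE {A} : Zmeasurable Z A -> mu A = n%:R^-1 * \sum_(i < n) \1_A (X i w).
Proof. by rewrite /mu /empirical; case: pselect. Qed.

Lemma empirical_sigma_additive (F : nat -> set 'M[R]_(1, d)) :
  (forall i, Zmeasurable Z (F i)) -> trivIset setT F ->
  series (fun i => mu (F i)) N @[N --> \oo] --> mu (\bigcup_i F i).
Proof.
move=> mF tF; apply: cvg_near_cst.
have /filter_forall : forall i : 'I_n,
    \forall N \near \oo, \sum_(j < N) \1_(F j) (X i w) = \1_(\bigcup_j F j) (X i w) :> R.
  by move=> i; exact: trivIset_sum_indic_near.
apply: filterS => N sumE; rewrite /series /= big_mkord.
rewrite (empiricalE (Zmeasurable_bigcup mF)).
under eq_bigr do rewrite (empiricalE (mF _)).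
by rewrite -mulr_sumr exchange_big /=; congr (_ * _); apply: eq_bigr => i _.
Qed.

Lemma empirical_variation_le1 (F : nat -> set 'M[R]_(1, d)) N :
  (forall i, Zmeasurable Z (F i)) -> trivIset setT F ->
  \sum_(i < N) `|mu (F i)| <= 1.
Proof.
move=> mF tF; under eq_bigr do rewrite (empiricalE (mF _)) ger0_norm
  ?mulr_ge0 ?invr_ge0 ?sumr_ge0 // => *; rewrite ?indicE ?ler0n //.
rewrite -mulr_sumr exchange_big /=.
have [->|n_gt0] := posnP n; first by rewrite big_ord0 mulr0.
rewrite ler_pdivrMl ?ltr0n // mulr1.
apply: le_trans (ler_sum _ (fun i _ => trivIset_sum_indic_le1 tF N)) _.
by rewrite sumr_const card_ord.
Qed.

Lemma empirical_ca : is_ca Z mu.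
Proof.
split; first by move=> A mA; rewrite /mu /empirical; case: pselect.
split; first exact: empirical_sigma_additive.
by exists 1 => F mF tF N; exact: empirical_variation_le1.
Qed.

Hypotheses (n_gt0 : (0 < n)%N) (XZ : forall i, Z (X i w)).

Lemma empirical_eq1 {A} : Zmeasurable Z A -> (forall i : 'I_n, A (X i w)) -> mu A = 1.
Proof.
move=> mA AX; rewrite empiricalE // (eq_bigr (fun=> 1)) => [|i _]; last first.
  by rewrite indicE mem_set.
by rewrite sumr_const card_ord mulVf // pnatr_eq0 -lt0n.
Qed.

Lemma empirical_discrete_prob : is_discrete_prob Z mu.
Proof.
pose sample := [set X i w | i in `I_n].
have fin_sample : finite_set sample by exact/finite_image/finite_II.
have sample_Z : sample `<=` Z by move=> _ [i _ <-].
split; last first.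
  exists sample; split; first exact: finite_set_countable.
  split=> //; apply: empirical_eq1; first exact: Zmeasurable_finite.
  by move=> i; exists i => //=; exact: ltn_ord.
split; first exact: empirical_ca.
split; last exact: empirical_eq1 Zmeasurable_Z (fun i => XZ i).
move=> A mA; rewrite empiricalE // mulr_ge0 ?invr_ge0 ?ler0n //.
by apply: sumr_ge0 => i _; rewrite indicE ler0n.
Qed.

End EmpiricalMeasure.

Section RegularizationOracle.
Context {R : realType} {d : nat} {Theta : normedModType R}.
Context {K : set R} {psi : @Meas R d -> Theta} {psik : R -> @Meas R d -> Theta}.
Context {Dpsi : set (@Meas R d)} {dist : @Meas R d -> @Meas R d -> R}.
Context {P : @Meas R d} {delta : R -> R -> R}.
Hypothesis psik_cont : reg_continuous_at K psik Dpsi dist P delta.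

Lemma reg_error_le k Q t : K k -> Dpsi Q -> 0 <= dist Q P -> dist Q P <= t ->
  `|psik k Q - psi P| <= delta k t + `|psik k P - psi P|.
Proof.
move=> Kk DQ dist_ge0 dist_le; have [/(_ k Kk)[_ [delta_mono _]] psik_lip] := psik_cont.
apply: le_trans (ler_distD (psik k P) _ _) _; rewrite lerD2r.
by apply: le_trans (psik_lip k Q Kk DQ) _; exact: delta_mono.
Qed.

Theorem ktilde_oracle {G : set R} {Q t} :
  finite_set G -> G !=set0 -> G `<=` K ->
  (forall k k', K k -> K k' -> k <= k' -> delta k t <= delta k' t) ->
  (forall k k', K k -> K k' -> k <= k' ->
     `|psik k' P - psi P| <= `|psik k P - psi P|) ->
  Dpsi Q -> 0 <= dist Q P -> dist Q P <= t ->
  `|psik (ktilde psik delta G t Q) Q - psi P|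
    <= 5 * inf [set delta k t + `|psik k P - psi P| | k in G].
Proof.
move=> fG G0 GK delta_mono bias_anti DQ dist_ge0 dist_le.
have t_ge0 : 0 <= t by exact: le_trans dist_le.
apply: (@lepski_oracle _ _ G (delta^~ t) (fun k => `|psik k P - psi P|) (psik^~ Q) (psi P) fG G0)
  => [k Gk|k Gk|k k' Gk Gk'|k k' Gk Gk'|k Gk].
- by have [/(_ k (GK _ Gk))[_ [_ [delta_ge0 _]]] _] := psik_cont; exact: delta_ge0.
- exact: normr_ge0.
- exact: delta_mono (GK _ Gk) (GK _ Gk').
- exact: bias_anti (GK _ Gk) (GK _ Gk').
- exact: reg_error_le (GK _ Gk) DQ dist_ge0 dist_le.
Qed.

End RegularizationOracle.

Theorem corollary1 (R : realType) (d : nat) (Z : set 'M[R]_(1, d))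
  (Theta : normedModType R) (K : set R) (M : set (@Meas R d))
  (psi : @Meas R d -> Theta) (psik : R -> @Meas R d -> Theta)
  (Dpsi : set (@Meas R d)) (dist : @Meas R d -> @Meas R d -> R)
  (delta : R -> R -> R) (P : @Meas R d) (r : nat -> R) (G : nat -> set R)
  (dO : measure_display) (Om : measurableType dO) (Pr : probability Om R)
  (X : nat -> Om -> 'M[R]_(1, d)) :
  (* K is a subset of R_+ unbounded above *)
  K `<=` [set k | 0 <= k] ->
  (forall x : R, exists k, K k /\ x < k) ->
  (* M is a set of Borel probability measures on Z *)
  M `<=` is_prob Z ->
  regularization Z K M psi psik Dpsi ->
  is_distance Dpsi dist ->
  M P ->
  reg_continuous_at K psik Dpsi dist P delta ->
  (* the data are IID with law P *)
  iid_law Pr Z X P ->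
  (* (r_n) positive and diverging, d(P_n, P) = o_P(r_n^-1) *)
  (forall n, 0 < r n) ->
  r n @[n --> \oo] --> +oo ->
  little_o_in_prob Pr (fun n w => dist (empirical Z X n w) P) (fun n => (r n)^-1) ->
  (* monotonicity / continuity assumptions *)
  {within K, continuous (fun k => `|psik k P - psi P|)} ->
  (forall k k', K k -> K k' -> k <= k' ->
     `|psik k' P - psi P| <= `|psik k P - psi P|) ->
  (forall n, {within K, continuous (fun k => delta k (r n)^-1)}) ->
  (forall n k k', K k -> K k' -> k <= k' ->
     delta k (r n)^-1 <= delta k' (r n)^-1) ->
  (* the grids G_n: finite (nonempty) subsets of K *)
  (forall n, finite_set (G n) /\ G n `<=` K /\ G n !=set0) ->
  big_O_in_prob Pr
    (fun n w => `|psik (ktilde psik delta (G n) (r n)^-1 (empirical Z X n w))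
                       (empirical Z X n w) - psi P|)
    (fun n => inf [set delta k (r n)^-1 + `|psik k P - psi P| | k in G n]).
Proof.
move=> _ _ _ [_ [MD [discrD _]]] dist_metric MP psik_cont [XZ _] r_gt0 _ dist_oP _
  bias_anti _ delta_mono grids eta eta_gt0.
exists 5; have [N _ dist_small] := dist_oP 1 eta ltr01 eta_gt0.
exists N.+1 => // n /= Nn; have [fG [GK G0]] := grids n.
have [B [mB [dist_large_B PrB]]] := dist_small n (ltnW Nn).
exists B; split => //; split => //; apply: subset_trans dist_large_B => w /=.
set Pn := empirical Z X n w; rewrite mul1r normr_id => err_large.
have DPn : Dpsi Pn.
  apply: (discrD Pn); apply: empirical_discrete_prob => [|i]; last exact: XZ.
  exact: leq_ltn_trans Nn.
have [dist_ge0 _] := dist_metric _ _ _ DPn (MD _ MP) (MD _ MP).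
rewrite ger0_norm // ltNge; apply/negP => dist_le; move: err_large; apply/negP.
by rewrite -leNgt; apply: (ktilde_oracle psik_cont fG G0 GK (delta_mono n) bias_anti).
Qed.
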